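(* Let $\phi\in\mathrm{Aut}_0(H)$. Then $\phi(H(m))\not\subseteq\sum_{i=0}^{m-1}H(i)$ for all $m\geq1$.
   Context: Let $k$ be a field and $0\neq q\in k$ not a root of unity. $H=k_q[x,x^{-1},y]$ is the $k$-algebra generated by $x,x^{-1},y$ with $xx^{-1}=x^{-1}x=1$, $yx=qxy$, a Hopf algebra with $\Delta(x)=x\otimes x$, $\Delta(x^{-1})=x^{-1}\otimes x^{-1}$, $\Delta(y)=y\otimes x+1\otimes y$, $\varepsilon(x)=1$, $\varepsilon(y)=0$; $\{x^ny^m:n\in\mathbb{Z},m\in\mathbb{N}\}$ is a $k$-basis. $H_0=\mathrm{span}\{x^n:n\in\mathbb{Z}\}$ and $H(m)=H_0y^m$. $\mathrm{Aut}_0(H)$ is the group of coalgebra automorphisms $\phi$ of $H$ with $\phi(1)=1$. *)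

From HB Require Import structures.
From mathcomp Require Import all_boot all_order all_algebra.
From mathcomp Require Import finmap.
From mathcomp.multinomials Require Import monalg.

Set Implicit Arguments.
Unset Strict Implicit.
Unset Printing Implicit Defensive.

Import Order.TTheory GRing.Theory Num.Theory.
Local Open Scope ring_scope.

(* The quantum Laurent plane H = k_q[x, x^-1, y] as a k-vector space with
   basis x^n y^m, (n, m) in Z x N : the basis vector x^n y^m is << (n, m) >>. *)
Definition H (k : fieldType) := {malg k[(int * nat)%type]}.
(* H (x) H, with basis (x^a y^b) (x) (x^c y^d) = << ((a,b),(c,d)) >>. *)
Definition HH (k : fieldType) := {malg k[((int * nat) * (int * nat))%type]}.

Section QPlane.
Variables (k : fieldType) (q : k).

Definition mon (n : int) (m : nat) : H k := << (n, m) >>.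

(* multiplication of H, determined by y x = q x y :
   (x^a y^b)(x^c y^d) = q^(b c) x^(a+c) y^(b+d) *)
Definition mulH (u v : H k) : H k :=
  \sum_(a <- msupp u) \sum_(b <- msupp v)
     (u@_a * v@_b * q ^ (a.2%:Z * b.1)) *: << (a.1 + b.1, a.2 + b.2) >>.

Definition oneH : H k := mon 0 0.
Definition xH : H k := mon 1 0.
Definition xinvH : H k := mon (-1) 0.
Definition yH : H k := mon 0 1.

Definition tens (u v : H k) : HH k :=
  \sum_(a <- msupp u) \sum_(b <- msupp v) (u@_a * v@_b) *: << (a, b) >>.

Definition mulHH (s t : HH k) : HH k :=
  \sum_(a <- msupp s) \sum_(b <- msupp t)
     (s@_a * t@_b) *: tens (mulH << a.1 >> << b.1 >>) (mulH << a.2 >> << b.2 >>).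

Definition oneHH : HH k := tens oneH oneH.

Definition powHH (t : HH k) (m : nat) : HH k := iter m (mulHH t) oneHH.

Definition Dx : HH k := tens xH xH.
Definition Dxinv : HH k := tens xinvH xinvH.
Definition Dy : HH k := tens yH xH + tens oneH yH.

Definition DxZ (n : int) : HH k :=
  match n with Posz j => powHH Dx j | Negz j => powHH Dxinv j.+1 end.

(* Delta(x^n y^m) = Delta(x)^n Delta(y)^m, Delta being an algebra map *)
Definition DeltaB (b : int * nat) : HH k := mulHH (DxZ b.1) (powHH Dy b.2).

Definition Delta (h : H k) : HH k := \sum_(b <- msupp h) h@_b *: DeltaB b.
Definition eps (h : H k) : k := \sum_(b <- msupp h) h@_b * (b.2 == 0%N)%:R.

Definition tmap (f g : H k -> H k) (t : HH k) : HH k :=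
  \sum_(a <- msupp t) t@_a *: tens (f << a.1 >>) (g << a.2 >>).

(* phi in Aut_0(H): a coalgebra automorphism with phi(1) = 1 *)
Definition in_Aut0 (phi : {linear H k -> H k}) : Prop :=
  [/\ bijective phi,
      forall h, Delta (phi h) = tmap phi phi (Delta h),
      forall h, eps (phi h) = eps h
    & phi oneH = oneH].
End QPlane.

(* h \in H(m) = H_0 y^m = span{x^n y^m : n in Z} *)
Definition inHdeg (k : fieldType) (m : nat) (h : H k) : Prop :=
  forall b : int * nat, b.2 <> m -> h@_b = 0.

(* h \in sum_{i=0}^{m-1} H(i) = span{x^n y^i : n in Z, i < m} *)
Definition inHbelow (k : fieldType) (m : nat) (h : H k) : Prop :=
  forall b : int * nat, (m <= b.2)%N -> h@_b = 0.

(* The filtration F_n = span {x^a y^i : i <= n} of H is detected by the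
   comultiplication: Delta (x^a y^(N+1)) contains x^a y^N (x) x^(a+N) y with
   coefficient 1 + q + ... + q^N = [N+1]_q, which is nonzero because q is not a
   root of unity, so h lies in F_n iff Delta h lies in F_(n-1) (x) H + H (x) H(0).
   Since group-likes lie in H(0), induction on n shows that every linear map
   commuting with Delta preserves each F_n.  The inverse psi of phi also commutes
   with Delta, so phi (y^m) in F_(m-1) would force y^m = psi (phi (y^m)) in F_(m-1). *)

From HB Require Import structures.
From mathcomp Require Import all_boot all_order all_algebra.
From mathcomp Require Import finmap.
From mathcomp.multinomials Require Import monalg.
From mathcomp Require Import zify.

Set Implicit Arguments.
Unset Strict Implicit.
Unset Printing Implicit Defensive.

Import GRing.Theory.
Local Open Scope fset_scope.
Local Open Scope ring_scope.

Section LinearExtension.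
Variables (k : fieldType) (K : choiceType) (V : lmodType k).

Definition mlin (G : K -> V) (g : {malg k[K]}) : V :=
  \sum_(a <- msupp g) g@_a *: G a.

Lemma mlinEw (G : K -> V) (d : {fset K}) g :
  msupp g `<=` d -> mlin G g = \sum_(a <- d) g@_a *: G a.
Proof.
move=> le_gd; rewrite /mlin (big_fset_incl _ le_gd) // => a _ /mcoeff_outdom ->.
by rewrite scale0r.
Qed.

Fact mlin_is_linear (G : K -> V) : linear (mlin G).
Proof.
move=> c u v; pose d := msupp u `|` msupp v.
have le_cu_v : msupp (c *: u + v) `<=` d.
  by apply: fsubset_trans (msuppD_le _ _) _; rewrite fsetSU ?msuppZ_le.
rewrite (mlinEw G le_cu_v) (mlinEw G (fsubsetUl (msupp u) (msupp v))).
rewrite (mlinEw G (fsubsetUr (msupp u) (msupp v))).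
rewrite scaler_sumr -big_split; apply: eq_bigr => a _.
by rewrite mcoeffD mcoeffZ scalerDl scalerA.
Qed.

HB.instance Definition _ (G : K -> V) :=
  GRing.isLinear.Build k {malg k[K]} V *:%R (mlin G) (mlin_is_linear G).

Lemma mlinD (G : K -> V) u v : mlin G (u + v) = mlin G u + mlin G v.
Proof. exact: linearD. Qed.

Lemma mlinU (G : K -> V) a : mlin G << a >> = G a.
Proof. by rewrite /mlin msuppU oner_eq0 big_seq_fset1 mcoeffUU scale1r. Qed.

Lemma eq_mlin (G G' : K -> V) : G =1 G' -> mlin G =1 mlin G'.
Proof. by move=> eqG g; apply: eq_bigr => a _; rewrite eqG. Qed.

End LinearExtension.

Section BasisExpansion.
Variables (k : fieldType) (K K' : choiceType).

Lemma mlin_comp (V V' : lmodType k) (L : {linear V -> V'}) (G : K -> V) g :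
  L (mlin G g) = mlin (L \o G) g.
Proof. by rewrite linear_sum; apply: eq_bigr => a _; rewrite linearZ. Qed.

Lemma mlin_malg (g : {malg k[K]}) : mlin (fun a => << a >>) g = g.
Proof.
rewrite [RHS]monalgE; apply: eq_bigr => a _.
by apply/malgP => b; rewrite mcoeffZ !mcoeffU mulr_natr.
Qed.

Lemma linear_mlin (V : lmodType k) (f : {linear {malg k[K]} -> V}) g :
  f g = mlin (fun a => f (<< a >> : {malg k[K]})) g.
Proof. by rewrite -{1}(mlin_malg g) mlin_comp. Qed.

Variable G : K -> {malg k[K']}.

Lemma mcoeff_mlin g z : (mlin G g)@_z = \sum_(a <- msupp g) g@_a * (G a)@_z.
Proof. by rewrite /mlin raddf_sum; apply: eq_bigr => a _; rewrite /= mcoeffZ. Qed.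

Lemma mcoeff_mlin_eq0 g z :
  (forall a, g@_a != 0 -> (G a)@_z = 0) -> (mlin G g)@_z = 0.
Proof.
move=> Gz; rewrite mcoeff_mlin big1_fset // => a ga _.
by rewrite Gz ?mulr0 ?mcoeff_neq0.
Qed.

Lemma mcoeff_mlin_neq0 g z :
  (mlin G g)@_z != 0 -> exists2 a, g@_a != 0 & (G a)@_z != 0.
Proof.
move=> nz; have /hasP[a ga Gaz] : has (fun a => (G a)@_z != 0) (msupp g).
  apply: contraNT nz => /hasPn Gz; apply/eqP/mcoeff_mlin_eq0 => a.
  by rewrite mcoeff_neq0 => /Gz /negPn /eqP.
by exists a => //; rewrite mcoeff_neq0.
Qed.

Lemma mcoeff_mlin_eq1 g c z :
  (forall a, a != c -> (G a)@_z = 0) -> (mlin G g)@_z = g@_c * (G c)@_z.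
Proof.
move=> Gz; rewrite mcoeff_mlin; have [gc|gc] := boolP (c \in msupp g).
  rewrite (big_fsetD1 c) //= big1_fset ?addr0 // => a /fsetD1P[ac _] _.
  by rewrite Gz ?mulr0.
rewrite (mcoeff_outdom gc) mul0r big1_fset // => a ga _.
by rewrite Gz ?mulr0 //; apply: contraNneq gc => <-.
Qed.
End BasisExpansion.

Lemma addr_neq0 (V : zmodType) (x y : V) : x + y != 0 -> (x != 0) || (y != 0).
Proof. by case: (eqVneq x 0) => [->|//]; rewrite add0r. Qed.

Local Notation E := (int * nat)%type.
Local Notation E2 := (E * E)%type.

Section Tensor.
Variable k : fieldType.
Implicit Types (u v : H k) (t : HH k).

Lemma tensE u v : tens u v = mlin (fun a => mlin (fun b => << (a, b) >>) v) u.
Proof.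
apply: eq_bigr => a _; rewrite scaler_sumr; apply: eq_bigr => b _.
by rewrite scalerA.
Qed.

Lemma mcoeff_tens u v z : (tens u v)@_z = u@_z.1 * v@_z.2.
Proof.
case: z => z1 z2; rewrite tensE (mcoeff_mlin_eq1 _ (c := z1)) => [|a az].
  rewrite (mcoeff_mlin_eq1 _ (c := z2)) => [|b bz]; first by rewrite mcoeffUU mulr1.
  by rewrite mcoeffU xpair_eqE eqxx (negbTE bz).
apply: mcoeff_mlin_eq0 => b _.
by rewrite mcoeffU xpair_eqE (negbTE az).
Qed.

Lemma tensUU (a b : E) : tens << a >> << b >> = << (a, b) >> :> HH k.
Proof.
apply/malgP => -[z1 z2]; rewrite mcoeff_tens !mcoeffU xpair_eqE.
by case: (a == z1); rewrite ?mulr1n ?mul1r ?mulr0n ?mul0r.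
Qed.

Lemma tmapE (f g : H k -> H k) :
  tmap f g =1 mlin (fun a => tens (f << a.1 >>) (g << a.2 >>)).
Proof. by []. Qed.

Lemma tmap_tens (f g : {linear H k -> H k}) u v :
  tmap f g (tens u v) = tens (f u) (g v).
Proof.
apply/malgP => z; rewrite tmapE tensE mlin_comp mcoeff_tens.
rewrite (linear_mlin f) (linear_mlin g) !mcoeff_mlin big_distrl.
apply: eq_bigr => a _.
rewrite /= mlin_comp mcoeff_mlin -mulrA (big_distrr ((f << a >>)@_z.1)).
rewrite /comp /=.
by under eq_bigr => b _ do rewrite mlinU mcoeff_tens /= mulrCA.
Qed.

Lemma tmap_comp (f g f' g' : {linear H k -> H k}) t :
  tmap f' g' (tmap f g t) = tmap (f' \o f) (g' \o g) t.
Proof.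
rewrite [tmap f g t]tmapE (tmapE f' g') mlin_comp [RHS]tmapE.
by apply: eq_mlin => a; rewrite /comp /= -(tmapE f' g') tmap_tens.
Qed.

Lemma tmap_id (f g : H k -> H k) t : f =1 id -> g =1 id -> tmap f g t = t.
Proof.
move=> fid gid; rewrite tmapE -[RHS]mlin_malg; apply: eq_mlin => -[a b].
by rewrite /= fid gid tensUU.
Qed.
End Tensor.

Definition eadd (a b : E) : E := (a.1 + b.1, (a.2 + b.2)%N).
Definition eadd2 (a b : E2) : E2 := (eadd a.1 b.1, eadd a.2 b.2).

Lemma eadd2I a : injective (eadd2 a).
Proof.
move=> [[b1 b2] [b3 b4]] [[c1 c2] [c3 c4]] [/= e1 e2 e3 e4].
congr ((_, _), (_, _)); lia.
Qed.

Definition qtwist (k : fieldType) (q : k) (a b : E2) : k :=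
  q ^ (a.1.2%:Z * b.1.1) * q ^ (a.2.2%:Z * b.2.1).

Section Product.
Variables (k : fieldType) (q : k).
Implicit Types (a b : E2) (s t : HH k).

Lemma mulHUU (a b : E) :
  mulH q << a >> << b >> = q ^ (a.2%:Z * b.1) *: << eadd a b >>.
Proof. by rewrite /mulH !msuppU !oner_eq0 !big_seq_fset1 !mcoeffUU !mul1r. Qed.

Lemma tens_mulHUU a b :
  tens (mulH q << a.1 >> << b.1 >>) (mulH q << a.2 >> << b.2 >>)
  = qtwist q a b *: << eadd2 a b >>.
Proof.
apply/malgP => z; rewrite !mulHUU mcoeffZ mcoeff_tens !mcoeffZ mulrACA.
by rewrite -mcoeff_tens tensUU.
Qed.

Lemma mulHHE s t :
  mulHH q s t = mlin (fun a => mlin (fun b => qtwist q a b *: << eadd2 a b >>) t) s.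
Proof.
apply: eq_bigr => a _; rewrite scaler_sumr; apply: eq_bigr => b _.
by rewrite scalerA tens_mulHUU.
Qed.

Lemma mulHHUU a b : mulHH q << a >> << b >> = qtwist q a b *: << eadd2 a b >>.
Proof. by rewrite mulHHE !mlinU. Qed.

Lemma mulHHU a t :
  mulHH q << a >> t = mlin (fun b => qtwist q a b *: << eadd2 a b >>) t.
Proof. by rewrite mulHHE mlinU. Qed.

Lemma mulHH_mlinl s t : mulHH q s t = mlin (fun a => mulHH q << a >> t) s.
Proof. by rewrite mulHHE; apply: eq_mlin => a; rewrite mulHHU. Qed.

Lemma mcoeff_mulHHU_eadd2 a b t :
  (mulHH q << a >> t)@_(eadd2 a b) = t@_b * qtwist q a b.
Proof.
rewrite mulHHU (mcoeff_mlin_eq1 _ (c := b)) => [|c cb].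
  by rewrite mcoeffZ mcoeffUU mulr1.
by rewrite mcoeffZ mcoeffU (inj_eq (@eadd2I a)) (negbTE cb) mulr0.
Qed.

Lemma mcoeff_mulHHU_eq0 a t z :
  (forall b, eadd2 a b != z) -> (mulHH q << a >> t)@_z = 0.
Proof.
move=> nz; rewrite mulHHU; apply: mcoeff_mlin_eq0 => b _.
by rewrite mcoeffZ mcoeffU (negbTE (nz b)) mulr0.
Qed.

Lemma mcoeff_mulHHU_neq0 a t z :
  (mulHH q << a >> t)@_z != 0 -> exists2 b, t@_b != 0 & z = eadd2 a b.
Proof.
rewrite mulHHU => /mcoeff_mlin_neq0[b tb]; rewrite mcoeffZ mcoeffU.
case: (eadd2 a b =P z) => [<-|_]; first by exists b.
by rewrite mulr0n mulr0 eqxx.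
Qed.
End Product.

Definition xdiag (n : int) : E2 := ((n, 0%N), (n, 0%N)).
Definition y_tx : E2 := ((0, 1%N), (1, 0%N)).
Definition one_ty : E2 := ((0, 0%N), (0, 1%N)).
Definition yexp (i j : nat) : E2 := ((0, i), (i%:Z, j)).

Section Comultiplication.
Variables (k : fieldType) (q : k).
Local Notation Dyn := (powHH q (Dy k)).

Lemma qtwist_xdiag n b : qtwist q (xdiag n) b = 1.
Proof. by rewrite /qtwist /= !mul0r expr0z mulr1. Qed.

Lemma eadd2_xdiag m n : eadd2 (xdiag m) (xdiag n) = xdiag (m + n).
Proof. by []. Qed.

Lemma oneHHE : oneHH k = << xdiag 0 >>.
Proof. exact: tensUU. Qed.

Lemma powHH_xdiag a n : powHH q << xdiag a >> n = << xdiag (a * n%:Z) >>.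
Proof.
elim: n => [|n IHn]; first by rewrite [powHH _ _ _]/= mulr0 oneHHE.
rewrite [powHH _ _ _]/= {}IHn mulHHUU qtwist_xdiag scale1r eadd2_xdiag.
by rewrite intS mulrDr mulr1.
Qed.

Lemma DxZE n : DxZ q n = << xdiag n >>.
Proof.
case: n => j; first by rewrite /DxZ /Dx tensUU powHH_xdiag mul1r.
by rewrite /DxZ /Dxinv tensUU powHH_xdiag NegzE mulN1r.
Qed.

Lemma DyE : Dy k = << y_tx >> + << one_ty >>.
Proof. by rewrite /Dy !tensUU. Qed.

Lemma powHH_DyS n :
  Dyn n.+1 = mulHH q << y_tx >> (Dyn n) + mulHH q << one_ty >> (Dyn n).
Proof.
have -> : Dyn n.+1 = mulHH q (<< y_tx >> + << one_ty >>) (Dyn n) by rewrite -DyE.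
(* Each summand is selected explicitly: matching a pattern against a distinct
   monomial << b >> makes the unifier unfold [mkmalgU], which is very slow. *)
by rewrite mulHH_mlinl mlinD [X in X + _]mlinU [X in _ + X = _]mlinU.
Qed.

Lemma mcoeff_powHH_Dy_neq0 n z :
  (Dyn n)@_z != 0 -> [/\ z.1.1 = 0, z.2.1 = z.1.2%:Z & (z.1.2 + z.2.2)%N = n].
Proof.
elim: n z => [|n IHn] z.
  rewrite [Dyn _]/= oneHHE mcoeffU.
  by case: (xdiag 0 =P z) => [<- //|_]; rewrite mulr0n eqxx.
rewrite powHH_DyS mcoeffD => /addr_neq0/orP[] /mcoeff_mulHHU_neq0[].
all: by move=> [[b1 b2] [b3 b4]] /IHn[/= -> -> <-] ->; split; rewrite /= ?add0r; lia.
Qed.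

Lemma eadd2_y_tx i j : eadd2 y_tx (yexp i j) = yexp i.+1 j.
Proof. by rewrite /eadd2 /eadd /=; congr ((_, _), (_, _)); lia. Qed.

Lemma eadd2_one_ty i j : eadd2 one_ty (yexp i j) = yexp i j.+1.
Proof. by rewrite /eadd2 /eadd /=; congr ((_, _), (_, _)); lia. Qed.

Lemma qtwist_y_tx i j : qtwist q y_tx (yexp i j) = 1.
Proof. by rewrite /qtwist /y_tx /yexp /= mulr0 mul0r expr0z mulr1. Qed.

Lemma qtwist_one_ty i j : qtwist q one_ty (yexp i j) = q ^+ i.
Proof. by rewrite /qtwist /one_ty /yexp /= mulr0 expr0z !mul1r exprnP. Qed.

Lemma mcoeff_powHH_Dy_top n : (Dyn n)@_(yexp n 0) = 1.
Proof.
elim: n => [|n IHn].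
  by rewrite [Dyn _]/= oneHHE (_ : yexp 0 0 = xdiag 0) ?mcoeffUU.
rewrite powHH_DyS mcoeffD -eadd2_y_tx [X in X + _]mcoeff_mulHHU_eadd2.
rewrite {}IHn qtwist_y_tx mul1r [X in _ + X]mcoeff_mulHHU_eq0 ?addr0 // => b.
by apply/eqP => /(congr1 (fun z => z.2.2)).
Qed.

Lemma mcoeff_powHH_Dy_sub n : (Dyn n.+1)@_(yexp n 1) = \sum_(i < n.+1) q ^+ i.
Proof.
elim: n => [|n IHn]; rewrite powHH_DyS mcoeffD -[yexp _ 1]eadd2_one_ty.
all: rewrite [X in _ + X]mcoeff_mulHHU_eadd2 mcoeff_powHH_Dy_top qtwist_one_ty mul1r.
all: rewrite big_ord_recr /=.
  rewrite big_ord0 [X in X + _]mcoeff_mulHHU_eq0 // => b.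
  by apply/eqP => /(congr1 (fun z => z.1.2)) /=; lia.
rewrite eadd2_one_ty -eadd2_y_tx [X in X + _]mcoeff_mulHHU_eadd2.
by rewrite {}IHn qtwist_y_tx mulr1.
Qed.

Lemma DeltaE h : Delta q h = mlin (DeltaB q) h.
Proof. by []. Qed.

Lemma DeltaBE b : DeltaB q b = mulHH q << xdiag b.1 >> (Dyn b.2).
Proof. by rewrite /DeltaB DxZE. Qed.

Lemma DeltaB_grouplike a : DeltaB q (a, 0%N) = << xdiag a >>.
Proof.
rewrite DeltaBE [Dyn _]/= oneHHE mulHHUU qtwist_xdiag scale1r eadd2_xdiag.
by rewrite addr0.
Qed.

Lemma mcoeff_DeltaB_neq0 b z : (DeltaB q b)@_z != 0 ->
  [/\ z.1.1 = b.1, z.2.1 = b.1 + z.1.2%:Z & (z.1.2 + z.2.2)%N = b.2].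
Proof.
rewrite DeltaBE => /mcoeff_mulHHU_neq0[[[c1 c2] [c3 c4]]].
by move=> /mcoeff_powHH_Dy_neq0[/= -> -> <-] ->; split; rewrite /= ?add0r; lia.
Qed.

Lemma mcoeff_DeltaB_sub a n :
  (DeltaB q (a, n.+1))@_(eadd2 (xdiag a) (yexp n 1)) = \sum_(i < n.+1) q ^+ i.
Proof.
by rewrite DeltaBE mcoeff_mulHHU_eadd2 qtwist_xdiag mulr1 mcoeff_powHH_Dy_sub.
Qed.
End Comultiplication.

(* [inHHbelow n t] says that t lies in F_(n-1) (x) H + H (x) H(0),
   where F_j is the span of the x^a y^i with i <= j. *)
Definition inHHbelow (k : fieldType) (n : nat) (t : HH k) : Prop :=
  forall z : E2, (n <= z.1.2)%N -> (0 < z.2.2)%N -> t@_z = 0.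

Section Filtration.
Variables (k : fieldType) (q : k).
Hypothesis q_not_root1 : forall n : nat, (0 < n)%N -> q ^+ n != 1.

Lemma qnat_neq0 n : \sum_(i < n.+1) q ^+ i != 0.
Proof.
apply: contra (q_not_root1 (ltn0Sn n)) => /eqP sum0.
by rewrite -subr_eq0 subrX1 sum0 mulr0.
Qed.

Lemma inHbelowU n (a : E) : (a.2 < n)%N -> inHbelow n (<< a >> : H k).
Proof.
move=> lt_an b le_nb; rewrite mcoeffU; case: eqP => [eq_ab|_]; last by rewrite mulr0n.
by rewrite eq_ab ltnNge le_nb in lt_an.
Qed.

Lemma Delta_below n h : inHbelow n.+1 h -> inHHbelow n (Delta q h).
Proof.
move=> hn z z1 z2; rewrite DeltaE; apply: mcoeff_mlin_eq0 => b hb.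
have [//|/mcoeff_DeltaB_neq0[_ _ zb]] := eqVneq ((DeltaB q b)@_z) 0.
by move/eqP: hb; rewrite hn // -zb -addn1 leq_add.
Qed.

Lemma below_Delta n h : inHHbelow n (Delta q h) -> inHbelow n.+1 h.
Proof.
move=> hn [a [//|m]] /= lt_nm.
have := hn (eadd2 (xdiag a) (yexp m 1)) lt_nm isT.
rewrite DeltaE (mcoeff_mlin_eq1 _ (c := (a, m.+1))) => [|b].
  rewrite mcoeff_DeltaB_sub => /eqP.
  by rewrite mulf_eq0 (negbTE (qnat_neq0 m)) orbF => /eqP.
apply: contraNeq => /mcoeff_DeltaB_neq0[/= e1 e2 e3].
apply/eqP; move: b e1 e2 e3 => [b1 b2] /=.
by rewrite addr0 => <- _; rewrite !add0n addn1 => <-.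
Qed.

Lemma grouplike_below1 g : Delta q g = tens g g -> inHbelow 1 g.
Proof.
move=> Dg [e [//|m]] _; have := congr1 (mcoeff ((e, m.+1), (e, m.+1))) Dg.
rewrite mcoeff_tens DeltaE mcoeff_mlin_eq0 => [/esym/eqP|b _].
  by rewrite mulf_eq0 orbb => /eqP.
set z := ((e, m.+1), (e, m.+1)).
have [//|/mcoeff_DeltaB_neq0[/= e1 e2 _]] := eqVneq ((DeltaB q b)@_z) 0.
by move: e2; rewrite -e1; lia.
Qed.

Lemma tmap_below (f g : H k -> H k) n t :
    (forall h, inHbelow n h -> inHbelow n (f h)) ->
    (forall h, inHbelow 1 h -> inHbelow 1 (g h)) ->
  inHHbelow n t -> inHHbelow n (tmap f g t).
Proof.
move=> fn g1 tn z z1 z2; rewrite tmapE; apply: mcoeff_mlin_eq0 => a ta.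
rewrite mcoeff_tens; have [le_na|lt_an] := leqP n a.1.2.
  have a2 : a.2.2 = 0%N.
    by apply/eqP; apply: contraNT ta; rewrite -lt0n => /(tn a le_na) ->.
  by rewrite (g1 _ (inHbelowU _)) ?a2 ?mulr0.
by rewrite (fn _ (inHbelowU lt_an)) ?mul0r.
Qed.
End Filtration.

Definition comultiplicative (k : fieldType) (q : k) (f : H k -> H k) : Prop :=
  forall h, Delta q (f h) = tmap f f (Delta q h).

Lemma comultiplicative_can (k : fieldType) (q : k) (f g : {linear H k -> H k}) :
  cancel f g -> cancel g f -> comultiplicative q f -> comultiplicative q g.
Proof.
move=> fK gK fD h; rewrite -[Delta q (g h)](tmap_id _ fK fK) -tmap_comp.
by rewrite -fD gK.
Qed.

Section ComultiplicativeMaps.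
Variables (k : fieldType) (q : k) (f : {linear H k -> H k}).
Hypothesis fD : comultiplicative q f.

Lemma comultiplicative_grouplike a :
  Delta q (f << (a, 0%N) >>) = tens (f << (a, 0%N) >>) (f << (a, 0%N) >>).
Proof. by rewrite fD DeltaE mlinU DeltaB_grouplike tmapE mlinU. Qed.

Lemma comultiplicative_below1 h : inHbelow 1 h -> inHbelow 1 (f h).
Proof.
move=> h1 z z1; rewrite (linear_mlin f) mcoeff_mlin_eq0 // => -[a [|m]] ham.
  exact: grouplike_below1 (comultiplicative_grouplike a) z z1.
by move/eqP: ham; rewrite h1.
Qed.

Hypothesis q_not_root1 : forall n : nat, (0 < n)%N -> q ^+ n != 1.

Lemma comultiplicative_below n h : inHbelow n.+1 h -> inHbelow n.+1 (f h).
Proof.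
elim: n h => [|n IHn] h hn; first exact: comultiplicative_below1.
apply: (below_Delta q_not_root1); rewrite fD.
by apply: tmap_below IHn comultiplicative_below1 _; apply: Delta_below.
Qed.
End ComultiplicativeMaps.

Theorem lemma2p8 (k : fieldType) (q : k) (hq0 : q != 0)
  (hqroot : forall n : nat, (0 < n)%N -> q ^+ n != 1)
  (phi : {linear H k -> H k}) (hphi : in_Aut0 q phi) :
  forall m : nat, (1 <= m)%N ->
    ~ (forall h : H k, inHdeg m h -> inHbelow m (phi h)).
Proof.
move=> m m_gt0 phi_low; have [[psi phiK psiK] phiD _ _] := hphi.
pose psiL : {linear H k -> H k} :=
  HB.pack psi (GRing.isLinear.Build _ _ _ _ psi (can2_linear phiK psiK)).
have psiD : comultiplicative q psiL :=
  @comultiplicative_can _ _ phi psiL phiK psiK phiD.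
have ym : inHdeg m (<< (0, m) >> : H k).
  by move=> b bm; rewrite mcoeffU; case: eqP => // eq_b; rewrite -eq_b in bm.
have low : inHbelow m.-1.+1 (phi << (0, m) >>) by rewrite prednK //; apply: phi_low.
have /(_ ((0, m) : E)) := comultiplicative_below psiD hqroot low.
rewrite /= prednK // leqnn phiK mcoeffUU => /(_ isT)/eqP.
by rewrite oner_eq0.
Qed.
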